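(* Let $G$ be a graph with $n$ vertices, $m\geq 1$ edges and maximum degree $\Delta$, let $\mathcal{L}(G)$ be its line graph, and let $0\leq\alpha\leq 1$. Then $$S_{k}(A_{\alpha}(\mathcal{L}(G)))\leq 2k(\alpha \Delta-1)+(1-\alpha)S_{k}(Q(G))$$ for $1\leq k \leq s$, where $s=\min\{n,m\}$. If $m>n$, then $$S_{k}(A_{\alpha}(\mathcal{L}(G)))\leq 2\alpha k(\Delta-1)+2(1-\alpha)(m-k)$$ for $n+1\leq k \leq m$.
   Context: All graphs are simple and undirected. $A(G)$ is the adjacency matrix, $D(G)$ the diagonal degree matrix, $Q(G)=D(G)+A(G)$ the signless Laplacian, and $A_{\alpha}(G)=\alpha D(G)+(1-\alpha)A(G)$. For a real symmetric matrix $M$ with eigenvalues $\lambda_1(M)\geq\cdots\geq\lambda_n(M)$, $S_k(M)=\sum_{i=1}^k\lambda_i(M)$. The line graph $\mathcal{L}(G)$ has vertex set $E(G)$, two vertices being adjacent iff the corresponding edges of $G$ share an endpoint. *)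

From HB Require Import structures.
From mathcomp Require Import all_boot all_order all_algebra.
From mathcomp Require Import polyrcf.
From mathcomp Require Import reals.
Set Implicit Arguments. Unset Strict Implicit. Unset Printing Implicit Defensive.
Import Order.TTheory GRing.Theory Num.Theory.
Local Open Scope ring_scope.

Definition simple_graph (V : finType) (e : rel V) : Prop :=
  symmetric e /\ irreflexive e.

Definition deg (V : finType) (e : rel V) (v : V) : nat := #|[set u | e v u]|.

Definition maxdeg (V : finType) (e : rel V) : nat := \max_(v : V) deg e v.

Definition is_edge (V : finType) (e : rel V) (E : {set V}) : bool :=
  [exists u : V, exists v : V, e u v && (E == [set u; v])].

Definition edge_type (V : finType) (e : rel V) : finType :=
  {E : {set V} | is_edge e E}.

Definition line_rel (V : finType) (e : rel V) : rel (edge_type e) :=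
  fun E F => (E != F) && (val E :&: val F != set0).
Arguments line_rel {V} e.

Definition adjmx (R : realType) (V : finType) (e : rel V) : 'M[R]_#|V| :=
  \matrix_(i, j) (e (enum_val i) (enum_val j))%:R.

Definition degmx (R : realType) (V : finType) (e : rel V) : 'M[R]_#|V| :=
  \matrix_(i, j) ((i == j)%:R * (deg e (enum_val i))%:R).

Definition Qmx (R : realType) (V : finType) (e : rel V) : 'M[R]_#|V| :=
  degmx R e + adjmx R e.

Definition Aalpha (R : realType) (alpha : R) (V : finType) (e : rel V)
  : 'M[R]_#|V| := alpha *: degmx R e + (1 - alpha) *: adjmx R e.

(* eigenvalues of a (real symmetric) matrix: the real roots of its
   characteristic polynomial, repeated according to multiplicity, sorted in
   non-increasing order: lambda_1 >= lambda_2 >= ... *)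
Definition eigvals (R : realType) (N : nat) (M : 'M[R]_N) : seq R :=
  let p := char_poly M in
  sort (fun x y : R => y <= x)
    (flatten [seq nseq (mup x p) x | x <- rootsR p]).

Definition Sk (R : realType) (N : nat) (M : 'M[R]_N) (k : nat) : R :=
  \sum_(i < k) nth 0 (eigvals M) i.

(* Let B be the vertex-edge incidence matrix of G, so that Q(G) = B B^T and
   A(L(G)) = B^T B - 2I.  By Ky Fan's principle, S_k(A_alpha(L(G))) equals
   tr(A_alpha(L(G)) H) for the orthogonal projection H onto k top eigenvectors,
   and this trace is alpha tr(D(L(G)) H) + (1 - alpha) (tr(B H B^T) - 2k).
   Since an edge uv has d(u) + d(v) - 2 neighbours in L(G), the first trace is
   at most (2 Delta - 2) k.  The second is at most tr(B B^T) = 2m, and at most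
   S_k(B B^T) when k <= n: in an eigenbasis of B B^T, the diagonal of B H B^T is
   the eigenvalues weighted by numbers in [0, 1] summing to at most k.
   Spectral decompositions are taken over R[i], where the spectral theorem for
   hermitian matrices is available. *)

From HB Require Import structures.
From mathcomp Require Import all_boot all_order all_algebra.
From mathcomp Require Import polyrcf.
From mathcomp Require Import reals.
From mathcomp Require Import complex spectral sesquilinear.
From mathcomp Require Import ring lra.
From mathcomp Require Import fingroup perm.
Import Order.TTheory GRing.Theory Num.Theory.
Local Open Scope ring_scope.
Set Implicit Arguments. Unset Strict Implicit. Unset Printing Implicit Defensive.

Section Majorization.
Variable R : realDomainType.

Lemma weighted_sum_le_sum_largest (N k : nat) (r w : 'I_N -> R) :
  (0 < k <= N)%N -> (forall i, 0 <= r i) -> (forall i, 0 <= w i <= 1) ->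
  \sum_i w i <= k%:R ->
  \sum_i r i * w i <=
    \sum_(j < k) nth 0 (sort (fun x y : R => y <= x) [seq r i | i <- enum 'I_N]) j.
Proof.
move=> /andP[k_gt0 leKN] r_ge0 w01 sum_w.
set s := sort _ _.
have size_s : size s = N by rewrite size_sort size_map size_enum_ord.
have s_sorted : sorted (fun x y : R => y <= x) s.
  by apply: sort_sorted; move=> x y; exact: le_total.
have ge_trans : transitive (fun x y : R => y <= x).
  by move=> x y z /= lexy leyz; exact: le_trans leyz lexy.
have perm_s : perm_eq s [seq r i | i <- enum 'I_N] by rewrite perm_sort.
have ltKN : (k.-1 < N)%N by rewrite prednK.
set t := nth 0 s k.-1.
have t_ge0 : 0 <= t.
  have : t \in [seq r i | i <- enum 'I_N] by rewrite -(perm_mem perm_s) mem_nth ?size_s.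
  by case/mapP => i _ ->.
have nth_le j1 j2 : (j1 <= j2 < N)%N -> nth 0 s j2 <= nth 0 s j1.
  case/andP=> le12 lt2N.
  by apply: (sorted_leq_nth ge_trans (@lexx _ _) 0 s_sorted); rewrite ?inE ?size_s //;
    exact: leq_ltn_trans lt2N.
have -> : \sum_i r i * w i = \sum_i (r i - t) * w i + t * \sum_i w i.
  by rewrite mulr_sumr -big_split; apply: eq_bigr => i _ /=; ring.
have pos_part : \sum_i (r i - t) * w i <= \sum_(x <- s) Num.max (x - t) 0.
  rewrite (perm_big _ perm_s) big_map big_enum /=; apply: ler_sum => i _.
  have /andP[w_ge0 w_le1] := w01 i.
  case: (leP t (r i)) => h; first by rewrite max_l ?subr_ge0 //; nra.
  by rewrite max_r ?mulr_le0_ge0 // subr_le0 ltW.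
have top_part : \sum_(x <- s) Num.max (x - t) 0 = \sum_(j < k) nth 0 s j - t * k%:R.
  rewrite (big_nth 0) size_s big_mkord (bigID (fun j : 'I_N => (j < k)%N)) /=.
  rewrite [X in _ + X]big1 ?addr0 => [|j]; last first.
    rewrite -leqNgt => leKj; rewrite max_r // subr_le0; apply: nth_le.
    by rewrite ltn_ord (leq_trans (leq_pred k) leKj).
  rewrite -(big_ord_widen N (fun j => Num.max (nth 0 s j - t) 0) leKN).
  rewrite mulr_natr -[in t *+ k](card_ord k) -sumr_const -sumrB.
  apply: eq_bigr => j _; rewrite max_l // subr_ge0; apply: nth_le.
  by rewrite ltKN andbT -ltnS prednK.
apply: le_trans (lerD pos_part (ler_wpM2l t_ge0 sum_w)) _.
by rewrite top_part subrK.
Qed.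

Lemma sum_largest_subset (N k : nat) (r : 'I_N -> R) : (k <= N)%N ->
  exists2 I : {set 'I_N}, #|I| = k &
    \sum_(j < k) nth 0 (sort (fun x y : R => y <= x) [seq r i | i <- enum 'I_N]) j
    = \sum_(i in I) r i.
Proof.
move=> leKN.
have : perm_eq (sort (fun x y : R => y <= x) [seq r i | i <- enum 'I_N])
               [tuple r i | i < N] by rewrite perm_sort.
case/tuple_permP=> s sorted_r.
exists [set i | (s^-1)%g i < k]%N.
  rewrite -sum1_card (reindex_inj (@perm_inj _ s)) /=.
  rewrite (eq_bigl (fun j : 'I_N => j < k)%N) => [|j]; last by rewrite inE (permK s j).
  by rewrite /= -(big_ord_widen _ (fun=> 1%N) leKN) sum1_card card_ord.
rewrite (big_ord_widen N (fun j => nth 0 _ j) leKN) [RHS](reindex_inj (@perm_inj _ s)) /=.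
apply: eq_big => [j|j _]; first by rewrite inE permK.
by rewrite sorted_r nth_mktuple tnth_mktuple.
Qed.

End Majorization.

Lemma sum_le_sum_largest (R : realFieldType) (N k : nat) (q c : 'I_N -> R) :
  (0 < k <= N)%N -> (forall i, 0 <= c i <= q i) -> \sum_i c i / q i <= k%:R ->
  \sum_i c i <=
    \sum_(j < k) nth 0 (sort (fun x y : R => y <= x) [seq q i | i <- enum 'I_N]) j.
Proof.
move=> kN c_bounds sum_ratios.
have q_ge0 i : 0 <= q i by have /andP[c_ge0 c_le] := c_bounds i; exact: le_trans c_le.
have cE i : c i = q i * (c i / q i).
  have [q_eq0|q_neq0] := eqVneq (q i) 0; last by rewrite mulrC divfK.
  by have := c_bounds i; rewrite q_eq0 -eq_le => /eqP <-; rewrite mul0r.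
rewrite (eq_bigr _ (fun i _ => cE i)).
apply: weighted_sum_le_sum_largest => // i.
have /andP[c_ge0 c_le] := c_bounds i.
have [q_eq0|q_neq0] := eqVneq (q i) 0; first by rewrite q_eq0 invr0 mulr0 lexx ler01.
by rewrite divr_ge0 ?q_ge0 //= ler_pdivrMr ?mul1r // lt_def q_neq0 q_ge0.
Qed.

Lemma char_poly_conj (F : comNzRingType) n (U P D : 'M[F]_n) :
  U *m P = 1%:M -> char_poly (U *m D *m P) = char_poly D.
Proof.
move=> UP; rewrite /char_poly.
have -> : char_poly_mx (U *m D *m P) =
    map_mx polyC U *m char_poly_mx D *m map_mx polyC P.
  rewrite /char_poly_mx !map_mxM mulmxBr mulmxBl; congr (_ - _).
  by rewrite mul_mx_scalar -scalemxAl -map_mxM UP map_mx1 scalemx1.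
by rewrite !det_mulmx mulrAC -det_mulmx -map_mxM UP map_mx1 det1 mul1r.
Qed.

Local Open Scope sesquilinear_scope.

Section HermitianProjections.
Variable C : numClosedFieldType.

Definition hermitian_proj n (H : 'M[C]_n) := H^t* = H /\ H *m H = H.

Lemma trmxC_mul m n p (X : 'M[C]_(m, n)) (Y : 'M[C]_(n, p)) :
  (X *m Y)^t* = Y^t* *m X^t*.
Proof. by rewrite trmx_mul map_mxM. Qed.

Lemma mulmx_trmxC_diag_ge0 m n (X : 'M[C]_(m, n)) i : 0 <= (X *m X^t*) i i.
Proof.
by rewrite mxE; apply: sumr_ge0 => j _; rewrite !mxE; exact: mul_conjC_ge0.
Qed.

Lemma mxtrace_mulmx_trmxC_ge0 m n (X : 'M[C]_(m, n)) : 0 <= \tr (X *m X^t*).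
Proof. by apply: sumr_ge0 => i _; exact: mulmx_trmxC_diag_ge0. Qed.

Section Projection.
Variables (n : nat) (H : 'M[C]_n).
Hypothesis projH : hermitian_proj H.

Lemma hermitian_proj_compl : hermitian_proj (1%:M - H).
Proof.
case: projH => Ht HH; split.
  by rewrite linearB /= trmx1 map_mxB map_mx1 Ht.
by rewrite mulmxBl !mulmxBr !mul1mx mulmx1 HH subrr subr0.
Qed.

Lemma hermitian_proj_sandwich m (X : 'M[C]_(m, n)) :
  X *m H *m X^t* = (X *m H) *m (X *m H)^t*.
Proof.
by case: projH => Ht HH; rewrite trmxC_mul Ht mulmxA -(mulmxA X H H) HH.
Qed.

Lemma hermitian_proj_diag_ge0 i : 0 <= H i i.
Proof.
case: projH => Ht HH; have -> : H = H *m H^t* by rewrite Ht HH.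
exact: mulmx_trmxC_diag_ge0.
Qed.

Lemma hermitian_proj_sandwich_diag_ge0 m (X : 'M[C]_(m, n)) i :
  0 <= (X *m H *m X^t*) i i.
Proof. by rewrite hermitian_proj_sandwich mulmx_trmxC_diag_ge0. Qed.

End Projection.

Lemma hermitian_proj_sandwich_diag_le m n (X : 'M[C]_(m, n)) H i :
  hermitian_proj H -> (X *m H *m X^t*) i i <= (X *m X^t*) i i.
Proof.
move=> projH; rewrite -subr_ge0.
have -> : (X *m X^t*) i i - (X *m H *m X^t*) i i = (X *m (1%:M - H) *m X^t*) i i.
  by rewrite mulmxBr mulmx1 mulmxBl !mxE.
exact/hermitian_proj_sandwich_diag_ge0/hermitian_proj_compl.
Qed.

Lemma hermitian_proj_sandwich_trace_le m n (X : 'M[C]_(m, n)) H :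
  hermitian_proj H -> \tr (X *m H *m X^t*) <= \tr (X *m X^t*).
Proof. by move=> projH; apply: ler_sum => i _; exact: hermitian_proj_sandwich_diag_le. Qed.

Lemma mxtrace_hermitian_proj_mul_le n (H K : 'M[C]_n) :
  hermitian_proj H -> hermitian_proj K -> \tr (H *m K) <= \tr H.
Proof.
move=> projH projK; rewrite -subr_ge0.
have -> : \tr H - \tr (H *m K) = \tr (H *m (1%:M - K) *m H^t*).
  case: projH => Ht HH.
  by rewrite Ht [in RHS]mxtrace_mulC mulmxA HH mulmxBr mulmx1 linearB.
rewrite hermitian_proj_sandwich ?mxtrace_mulmx_trmxC_ge0 //.
exact: hermitian_proj_compl.
Qed.

Lemma hermitian_proj_unitary_conj n (P H : 'M[C]_n) :
  P *m P^t* = 1%:M -> hermitian_proj H -> hermitian_proj (P^t* *m H *m P).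
Proof.
move=> PP [Ht HH]; split; first by rewrite !trmxC_mul trmxCK Ht mulmxA.
by rewrite !mulmxA -(mulmxA _ P) PP mulmx1 -(mulmxA _ H H) HH.
Qed.

Lemma hermitian_proj_diag_indicator n (I : {set 'I_n}) :
  hermitian_proj (diag_mx (\row_i ((i \in I)%:R : C))).
Proof.
split; rewrite ?tr_diag_mx ?map_diag_mx ?mulmx_diag; congr diag_mx; apply/rowP => i.
  by rewrite !mxE rmorph_nat.
by rewrite !mxE -natrM mulnb andbb.
Qed.

Lemma hermitian_proj_rows_weights_le m n (Y : 'M[C]_(m, n)) (d : 'rV[C]_m) H :
  Y *m Y^t* = diag_mx d -> hermitian_proj H ->
  \sum_i (Y *m H *m Y^t*) i i / d 0 i <= \tr H.
Proof.
move=> YY projH.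
have d_ge0 i : 0 <= d 0 i.
  by have := mulmx_trmxC_diag_ge0 Y i; rewrite YY mxE eqxx mulr1n.
set G := diag_mx (\row_i (d 0 i)^-1).
have GdG : G *m diag_mx d *m G = G.
  rewrite !mulmx_diag; congr diag_mx; apply/rowP => i; rewrite !mxE.
  by have [->|d_neq0] := eqVneq (d 0 i) 0; rewrite ?invr0 ?mulr0 // mulVf ?mul1r.
(* [Y^t* *m G *m Y] is the orthogonal projection onto the row space of [Y]. *)
have projK : hermitian_proj (Y^t* *m G *m Y).
  split.
    rewrite !trmxC_mul trmxCK mulmxA; congr (_ *m _ *m _).
    apply/matrixP => i j; rewrite !mxE eq_sym; case: eqP => [->|_]; rewrite ?mulr0n ?rmorph0 //.
    by rewrite !mulr1n conj_Creal // rpredV ger0_real.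
  have -> : Y^t* *m G *m Y *m (Y^t* *m G *m Y) = Y^t* *m (G *m (Y *m Y^t*) *m G) *m Y.
    by rewrite !mulmxA.
  by rewrite YY GdG.
suff -> : \sum_i (Y *m H *m Y^t*) i i / d 0 i = \tr (H *m (Y^t* *m G *m Y)).
  exact: mxtrace_hermitian_proj_mul_le.
rewrite mulmxA mxtrace_mulC !mulmxA mul_mx_diag.
by apply: eq_bigr => i _; rewrite !mxE.
Qed.

End HermitianProjections.

Lemma mxtrace_diag_mul_le (R : numDomainType) n (d : 'I_n -> R) (H : 'M[R]_n) c :
  (forall i, d i <= c) -> (forall i, 0 <= H i i) ->
  \tr (diag_mx (\row_i d i) *m H) <= c * \tr H.
Proof.
move=> d_le H_ge0; rewrite mul_diag_mx mulr_sumr; apply: ler_sum => i _.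
by rewrite !mxE ler_wpM2r.
Qed.

Section RealSpectral.
Variable R : realType.
Local Notation C := R[i].
Local Notation toC := (real_complex R).

Lemma map_real_trmxC m n (B : 'M[R]_(m, n)) : (map_mx toC B)^t* = map_mx toC B^T.
Proof. by apply/matrixP => i j; rewrite !mxE; exact: conjc_real. Qed.

Lemma map_real_diag n (d : 'I_n -> R) :
  map_mx toC (diag_mx (\row_i d i)) = diag_mx (\row_i (d i)%:C%C).
Proof. by rewrite map_diag_mx; congr diag_mx; apply/rowP => i; rewrite !mxE. Qed.

Lemma real_sym_spectral N (M : 'M[R]_N) : M^T = M ->
  exists P : 'M[C]_N, exists r : 'I_N -> R,
   [/\ P *m P^t* = 1%:M, P^t* *m P = 1%:M,
       map_mx toC M = P^t* *m diag_mx (\row_i (r i)%:C%C) *m P &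
       eigvals M = sort (fun x y : R => y <= x) [seq r i | i <- enum 'I_N]].
Proof.
move=> MT; set A := map_mx toC M.
have A_herm : A \is hermsymmx.
  by apply/is_hermitianmxP; rewrite expr0 scale1r map_real_trmxC MT.
have P_unitary := spectral_unitarymx A.
have AE : A = invmx (spectralmx A) *m diag_mx (spectral_diag A) *m spectralmx A.
  exact/orthomx_spectralP/hermitian_normalmx.
rewrite invmx_unitary // in AE.
have d_real := hermitian_spectral_diag_real A_herm.
set P := spectralmx A in P_unitary AE *; set d := spectral_diag A in d_real AE *.
pose r i := complex.Re (d 0 i).
have dE : d = \row_i (r i)%:C%C.
  by apply/rowP => i; rewrite mxE RRe_real //; move/mxOverP : d_real; apply.
have PP : P *m P^t* = 1%:M by apply/unitarymxP.
have P'P : P^t* *m P = 1%:M by apply: mulmx1C.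
exists P, r; split; rewrite -?dE //.
have charM : char_poly M = \prod_(y <- [seq r i | i <- enum 'I_N]) ('X - y%:P).
  apply: (map_poly_inj toC); rewrite map_char_poly -/A AE char_poly_conj //.
  rewrite char_poly_trig ?diag_mx_is_trig // rmorph_prod big_map big_enum /=.
  by apply: eq_bigr => i _; rewrite map_polyXsubC mxE eqxx mulr1n dE mxE.
rewrite /eigvals charM; apply/perm_sortP.
- by move=> x y; exact: le_total.
- by move=> x y z /= lexy leyz; exact: le_trans leyz lexy.
- by move=> x y /andP[h1 h2]; apply: le_anti; rewrite h1 h2.
set p := \prod_(y <- _) _; apply/allP => y _ /=.
rewrite count_flatten -map_comp sumnE big_map.
under eq_bigr do rewrite /= count_nseq /= mu_prod_XsubC.
have [y_root|y_nroot] := boolP (y \in rootsR p).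
  by rewrite (bigD1_seq y) ?uniq_roots //= eqxx mul1n big1 ?addn0 // => x /negbTE ->.
rewrite big1_seq => [|x /andP[_ x_root]]; last first.
  by case: eqP => // xy; rewrite -xy x_root in y_nroot.
apply/eqP/esym/count_memPn; apply: contra y_nroot => y_r.
by rewrite -(roots_on_rootsR (monic_neq0 (monic_prod_XsubC _ _ _))) /= root_prod_XsubC.
Qed.

Lemma Sk_eq_trace_proj N (M : 'M[R]_N) k : M^T = M -> (k <= N)%N ->
  exists H : 'M[C]_N, [/\ hermitian_proj H, \tr H = k%:R &
    \tr (map_mx toC M *m H) = (Sk M k)%:C%C].
Proof.
move=> MT leKN; have [P [r [PP P'P -> eigM]]] := real_sym_spectral MT.
have [I cardI SkE] := sum_largest_subset r leKN.
pose E := diag_mx (\row_i ((i \in I)%:R : C)).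
have sum_E (F : 'I_N -> C) : \sum_i F i * (i \in I)%:R = \sum_(i in I) F i.
  by rewrite [RHS]big_mkcond; apply: eq_bigr => i _; case: (i \in I); rewrite ?mulr1 ?mulr0.
exists (P^t* *m E *m P); split.
- exact: hermitian_proj_unitary_conj PP (hermitian_proj_diag_indicator _ I).
- rewrite mxtrace_mulC mulmxA PP mul1mx mxtrace_diag.
  under eq_bigr do rewrite mxE -[X in X%:R]mul1n natrM.
  by rewrite sum_E sumr_const cardI.
set D := diag_mx _.
have -> : P^t* *m D *m P *m (P^t* *m E *m P) = P^t* *m (D *m E) *m P.
  by rewrite !mulmxA -(mulmxA _ P) PP mulmx1.
rewrite mxtrace_mulC mulmxA PP mul1mx.
rewrite mulmx_diag mxtrace_diag /Sk eigM SkE rmorph_sum -sum_E.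
by apply: eq_bigr => i _; rewrite !mxE.
Qed.

Lemma mxtrace_gram_proj_le_Sk n m k (B : 'M[R]_(n, m)) (H : 'M[C]_m) :
  hermitian_proj H -> \tr H = k%:R -> (0 < k <= n)%N ->
  \tr (map_mx toC B *m H *m (map_mx toC B)^t*) <= (Sk (B *m B^T) k)%:C%C.
Proof.
move=> projH trH kn.
have BB_sym : (B *m B^T)^T = B *m B^T by rewrite trmx_mul trmxK.
have [P [q [PP P'P BBE eigBB]]] := real_sym_spectral BB_sym.
set Bc := map_mx toC B; set Y := P *m Bc.
have YY : Y *m Y^t* = diag_mx (\row_i (q i)%:C%C).
  rewrite trmxC_mul mulmxA -(mulmxA P) map_real_trmxC -map_mxM BBE.
  by rewrite !mulmxA PP mul1mx -mulmxA PP mulmx1.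
have trE : \tr (Bc *m H *m Bc^t*) = \tr (Y *m H *m Y^t*).
  by rewrite [in RHS]trmxC_mul !mulmxA [RHS]mxtrace_mulC !mulmxA P'P mul1mx.
pose c i := complex.Re ((Y *m H *m Y^t*) i i).
have cE i : (Y *m H *m Y^t*) i i = (c i)%:C%C.
  by rewrite RRe_real // ger0_real // hermitian_proj_sandwich_diag_ge0.
have c_bounds i : 0 <= c i <= q i.
  rewrite -!lecR -cE hermitian_proj_sandwich_diag_ge0 //=.
  by have := hermitian_proj_sandwich_diag_le Y i projH; rewrite YY !mxE eqxx mulr1n.
have ratios : \sum_i c i / q i <= k%:R.
  have := hermitian_proj_rows_weights_le YY projH.
  rewrite trH -(rmorph_nat toC) -lecR rmorph_sum; congr (_ <= _); apply: eq_bigr => i _.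
  by rewrite cE mxE fmorph_div.
rewrite trE /mxtrace (eq_bigr _ (fun i _ => cE i)) -rmorph_sum lecR /Sk eigBB.
exact: sum_le_sum_largest.
Qed.
End RealSpectral.

Section LineGraph.
Variables (V : finType) (e : rel V).
Hypothesis simple_e : simple_graph e.
Local Notation ET := (edge_type e).

Lemma line_rel_sym : symmetric (line_rel e).
Proof. by move=> E F; rewrite /line_rel eq_sym setIC. Qed.

Lemma e_sym u v : e u v = e v u.
Proof. by case: simple_e => e_symmetric _; rewrite e_symmetric. Qed.

Lemma e_neq u v : e u v -> u != v.
Proof. by case: simple_e => _ e_irr; apply: contraTneq => ->; rewrite e_irr. Qed.

Lemma is_edge_set2 u v : e u v -> is_edge e [set u; v].
Proof. by move=> euv; apply/existsP; exists u; apply/existsP; exists v; rewrite euv eqxx. Qed.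

Lemma mem_edgeE (E : ET) v : v \in val E -> exists2 u, e v u & val E = [set v; u].
Proof.
have /existsP[a /existsP[b /andP[eab /eqP ->]]] := valP E.
by case/set2P=> ->; [exists b | exists a; rewrite 1?e_sym // setUC].
Qed.

Lemma card_edge (E : ET) : #|val E| = 2%N.
Proof.
have /existsP[a /existsP[b /andP[eab /eqP ->]]] := valP E.
by rewrite cards2 e_neq.
Qed.

Lemma card_incident_edges v : #|[set E : ET | v \in val E]| = deg e v.
Proof.
rewrite -(card_imset _ val_inj) /deg.
have -> : val @: [set E : ET | v \in val E] = [set [set v; u] | u in [set u | e v u]].
  apply/setP => S; apply/imsetP/imsetP => [[E]|[u]]; rewrite inE.
    by case/mem_edgeE=> u evu -> ->; exists u; rewrite ?inE.
  by move=> evu ->; exists (Sub [set v; u] (is_edge_set2 evu)); rewrite //= inE set21.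
rewrite card_in_imset // => u u'; rewrite !inE => evu evu' eq_uu'.
have : u \in [set v; u'] by rewrite -eq_uu' set22.
by case/set2P => // u_v; move: evu; rewrite u_v => /e_neq; rewrite eqxx.
Qed.

Lemma card_common_edges u v : u != v ->
  #|[set E : ET | (u \in val E) && (v \in val E)]| = e u v.
Proof.
move=> neq_uv; have [euv|neuv] := boolP (e u v).
  rewrite (_ : [set E | _] = [set Sub [set u; v] (is_edge_set2 euv)]) ?cards1 //.
  apply/setP => E; rewrite !inE; apply/andP/eqP => [[/mem_edgeE[w euw EE]]|-> /=].
    rewrite EE => /set2P[v_u|v_w]; first by rewrite v_u eqxx in neq_uv.
    by apply: val_inj; rewrite SubK EE v_w.
  by rewrite set21 set22.
apply/eqP; rewrite cards_eq0; apply/eqP/setP => E; rewrite !inE.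
apply/negP => /andP[/mem_edgeE[w euw ->]] /set2P[v_u|v_w].
  by rewrite v_u eqxx in neq_uv.
by rewrite v_w euw in neuv.
Qed.

Lemma card_edge_meet (E F : ET) : E != F -> #|val E :&: val F| = line_rel e E F.
Proof.
move=> neq_EF; rewrite /line_rel neq_EF /=.
have [->|meet_neq0] := eqVneq (val E :&: val F) set0; first by rewrite cards0.
apply/eqP; rewrite eqn_leq card_gt0 meet_neq0 andbT leqNgt; apply: contra neq_EF => meet2.
have meetE : val E :&: val F = val E by apply/eqP; rewrite eqEcard subsetIl card_edge.
have meetF : val E :&: val F = val F by apply/eqP; rewrite eqEcard subsetIr card_edge.
by apply/eqP/val_inj; rewrite -meetE meetF.
Qed.

Lemma deg_line_rel (E : ET) : (deg (line_rel e) E + 2 = \sum_(v in val E) deg e v)%N.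
Proof.
have -> : (\sum_(v in val E) deg e v = \sum_(F : ET) #|val E :&: val F|)%N.
  under eq_bigr do rewrite -card_incident_edges -sum1_card.
  rewrite (exchange_big_dep xpredT) //=; apply: eq_bigr => F _.
  by rewrite -sum1_card; apply: eq_bigl => v; rewrite !inE.
rewrite (bigD1 E) //= setIid card_edge addnC; congr (_ + _)%N.
rewrite /deg -sum1_card big_mkcond [RHS]big_mkcond; apply: eq_bigr => F _.
rewrite inE; have [->|neq_FE] := eqVneq F E; first by rewrite /line_rel eqxx.
by rewrite card_edge_meet 1?eq_sym //; case: line_rel.
Qed.

Lemma deg_line_rel_le (E : ET) : ((deg (line_rel e) E).+2 <= 2 * maxdeg e)%N.
Proof.
rewrite -addn2 deg_line_rel -(card_edge E) -sum_nat_const.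
by apply: leq_sum => v _; exact: leq_bigmax.
Qed.

End LineGraph.

Lemma sum_indicator_mul (R : pzSemiRingType) (T : finType) (A B : pred T) :
  \sum_x ((A x)%:R * (B x)%:R : R) = #|[set x | A x && B x]|%:R.
Proof.
rewrite -sum1_card natr_sum [RHS]big_mkcond; apply: eq_bigr => x _.
by rewrite inE; case: (A x); case: (B x); rewrite ?mulr1 ?mulr0.
Qed.

Lemma sum_enum_val (R : nmodType) (T : finType) (F : T -> R) :
  \sum_(i < #|T|) F (enum_val i) = \sum_x F x.
Proof. by rewrite -big_enum_val. Qed.

Lemma degmx_diag (R : realType) (T : finType) (r : rel T) :
  degmx R r = diag_mx (\row_i (deg r (enum_val i))%:R).
Proof.
by apply/matrixP => i j; rewrite !mxE; case: eqP => [->|_]; rewrite ?mul1r ?mul0r.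
Qed.

Lemma Aalpha_sym (R : realType) (alpha : R) (T : finType) (r : rel T) :
  symmetric r -> (Aalpha alpha r)^T = Aalpha alpha r.
Proof.
move=> r_sym; rewrite linearD !linearZ /= degmx_diag tr_diag_mx -degmx_diag.
by congr (_ + _ *: _); apply/matrixP => i j; rewrite !mxE r_sym.
Qed.

Section IncidenceMatrix.
Variables (R : realType) (V : finType) (e : rel V).
Hypothesis simple_e : simple_graph e.
Local Notation ET := (edge_type e).

Definition incmx : 'M[R]_(#|V|, #|ET|) :=
  \matrix_(i < #|V|, j < #|ET|) (enum_val i \in val (enum_val j))%:R.

Lemma Qmx_incmx : Qmx R e = incmx *m incmx^T.
Proof.
apply/matrixP => i j; rewrite !mxE.
under [RHS]eq_bigr do rewrite !mxE.
rewrite (sum_enum_val (fun E : ET => (_ \in val E)%:R * (_ \in val E)%:R)).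
rewrite sum_indicator_mul; have [<-|neq_ij] := eqVneq i j.
  case: simple_e => _ e_irr; rewrite e_irr mulr1n mul1r addr0.
  by under eq_finset do rewrite andbb; rewrite card_incident_edges.
by rewrite mulr0n mul0r add0r card_common_edges // (inj_eq enum_val_inj).
Qed.

Lemma adjmx_line_rel : adjmx R (line_rel e) = incmx^T *m incmx - 2%:M.
Proof.
apply/matrixP => E F; rewrite !mxE.
under [X in _ = X - _]eq_bigr do rewrite !mxE.
rewrite (sum_enum_val (fun v => (v \in val (enum_val E))%:R * (v \in val (enum_val F))%:R)).
rewrite sum_indicator_mul (_ : [set v | _] = val (enum_val E) :&: val (enum_val F)).
  2: by apply/setP => v; rewrite !inE.
have [<-|neq_EF] := eqVneq E F; first by rewrite setIid card_edge // /line_rel eqxx subrr.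
by rewrite card_edge_meet ?(inj_eq enum_val_inj) // subr0.
Qed.

Lemma mxtrace_gram_incmx : \tr (incmx *m incmx^T) = 2 * #|ET|%:R.
Proof.
rewrite mxtrace_mulC (_ : incmx^T *m incmx = adjmx R (line_rel e) + 2%:M); last first.
  by rewrite adjmx_line_rel subrK.
rewrite mxtraceD mxtrace_scalar /mxtrace big1 ?add0r ?mulr_natr // => E _.
by rewrite mxE /line_rel eqxx.
Qed.

End IncidenceMatrix.

Section LineGraphSpectrum.
Variables (R : realType) (V : finType) (e : rel V).
Hypothesis simple_e : simple_graph e.
Local Notation ET := (edge_type e).
Local Notation toC := (real_complex R).
Local Notation B := (map_mx toC (incmx R e)).

Lemma Sk_Aalpha_line_le (alpha t : R) (k : nat) :
  0 <= alpha <= 1 -> (k <= #|ET|)%N ->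
  (forall H : 'M[R[i]]_#|ET|, hermitian_proj H -> \tr H = k%:R ->
     \tr (B *m H *m B^t*) <= t%:C%C) ->
  Sk (Aalpha alpha (line_rel e)) k <=
    2 * k%:R * (alpha * (maxdeg e)%:R - 1) + (1 - alpha) * t.
Proof.
move=> /andP[alpha_ge0 alpha_le1] leKm traceB_le.
have [H [projH trH trAH]] := Sk_eq_trace_proj (Aalpha_sym alpha (@line_rel_sym _ e)) leKm.
set D := map_mx toC (degmx R (line_rel e)).
have AE : map_mx toC (Aalpha alpha (line_rel e)) =
    alpha%:C%C *: D + (1 - alpha)%:C%C *: (B^t* *m B - 2%:M).
  rewrite /Aalpha adjmx_line_rel // map_mxD !map_mxZ map_mxB map_mxM.
  by rewrite map_scalar_mx rmorph_nat map_real_trmxC.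
pose degB : R := (2 * (maxdeg e)%:R - 2) * k%:R.
have trD : \tr (D *m H) <= degB%:C%C.
  rewrite /D degmx_diag map_real_diag rmorphM rmorph_nat -trH.
  apply: mxtrace_diag_mul_le => i; last exact: hermitian_proj_diag_ge0.
  have := deg_line_rel_le simple_e (enum_val i).
  by rewrite lecR -(ler_nat R) -addn2 natrD natrM; lra.
have trBB : \tr ((B^t* *m B - 2%:M) *m H) = \tr (B *m H *m B^t*) - 2 * k%:R.
  rewrite mulmxBl mul_scalar_mx linearB /= linearZ /= trH mulr_natl.
  by rewrite -[_ *m B *m H]mulmxA mxtrace_mulC.
rewrite -lecR -trAH AE mulmxDl -!scalemxAl mxtraceD !mxtraceZ trBB.
have -> : (2 * k%:R * (alpha * (maxdeg e)%:R - 1) + (1 - alpha) * t)%:C%C =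
    alpha%:C%C * degB%:C%C + (1 - alpha)%:C%C * (t%:C%C - 2 * k%:R).
  by rewrite /degB !(rmorph_nat, rmorphB, rmorphN, rmorphM, rmorphD, rmorph1); ring.
apply: lerD; first by rewrite ler_wpM2l ?ler0c.
by rewrite ler_wpM2l ?ler0c ?subr_ge0 // lerD2r traceB_le.
Qed.

End LineGraphSpectrum.

Local Close Scope sesquilinear_scope.
Unset Implicit Arguments.

Theorem theorem6p2 (R : realType) (V : finType) (e : rel V)
  (alpha : R) (k : nat) :
  simple_graph e ->
  (1 <= #|edge_type e|)%N ->
  0 <= alpha <= 1 ->
  ((1 <= k <= minn #|V| #|edge_type e|)%N ->
     Sk (Aalpha alpha (line_rel e)) k <=
       2 * k%:R * (alpha * (maxdeg e)%:R - 1) + (1 - alpha) * Sk (Qmx R e) k)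
  /\
  ((#|V| < #|edge_type e|)%N -> (#|V|.+1 <= k <= #|edge_type e|)%N ->
     Sk (Aalpha alpha (line_rel e)) k <=
       2 * alpha * k%:R * ((maxdeg e)%:R - 1)
       + 2 * (1 - alpha) * (#|edge_type e|%:R - k%:R)).
Proof.
move=> simple_e _ alpha01; split.
  rewrite leq_min => /and3P[k_gt0 leKn leKm].
  apply: Sk_Aalpha_line_le => // H projH trH; rewrite Qmx_incmx //.
  by apply: mxtrace_gram_proj_le_Sk; rewrite // k_gt0.
move=> _ /andP[_ leKm].
have -> : 2 * alpha * k%:R * ((maxdeg e)%:R - 1)
          + 2 * (1 - alpha) * (#|edge_type e|%:R - k%:R) =
    2 * k%:R * (alpha * (maxdeg e)%:R - 1) + (1 - alpha) * (2 * #|edge_type e|%:R).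
  by ring.
apply: Sk_Aalpha_line_le => // H projH _.
apply: le_trans (hermitian_proj_sandwich_trace_le _ projH) _.
by rewrite map_real_trmxC -map_mxM trace_map_mx mxtrace_gram_incmx.
Qed.
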